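(* In the setting below, let $\mu$ be a $\sigma$-invariant Borel probability measure on $X$. If $\mu(A_i)=1$ for some $1\le i\le r$, then $(X,\sigma,G,\mu)$ is measure conjugate to $(\overleftarrow{G},\phi,G,\nu)$, where $\overleftarrow{G}$ is the $G$-odometer associated to $(\Gamma_n)_{n\ge1}$, $\phi$ is its action by left multiplication and $\nu$ is its unique invariant (Haar) probability measure.
   Context: Setting: $G$ is a countable residually finite group, $r>1$; $(\Gamma_i)_{i\ge1}$ is a strictly decreasing sequence of finite index normal subgroups of $G$ with $\bigcap_i\Gamma_i=\{1_G\}$, $\Gamma_0=G$; $(D_i)_{i\ge0}$ are finite subsets with $D_0=\{1_G\}$, $D_i$ containing exactly one element of each coset of $\Gamma_i$, $1_G\in D_i\subseteq D_{i+1}$, $G=\bigcup_iD_i$, $D_j=\bigcup_{v\in D_j\cap\Gamma_i}vD_i$ for $j>i\ge1$, and $[G:\Gamma_i],[\Gamma_i:\Gamma_{i+1}]\ge3$. $\Sigma=\{1,\dots,r\}$, $\alpha_m\in\Sigma$ with $\alpha_m\equiv m\pmod r$. $J(0)=\{1_G\}$, $J(m)=D_m\setminus\bigcup_{i<m}J(i)\Gamma_{i+1}$; $\eta(hg)=\alpha_{m+1}$ for $h\in J(m)$, $g\in\Gamma_{m+1}$; $X=\overline{\{\sigma^g\eta\}}$ with $\sigma^gx(h)=x(g^{-1}h)$. $\mathrm{Per}(x,\Gamma,\alpha)=\{g:x(\gamma g)=\alpha\ \forall\gamma\in\Gamma\}$. For $n\ge1$: $C_n=\{x\in X:\mathrm{Per}(x,\Gamma_n,\alpha)=\mathrm{Per}(\eta,\Gamma_n,\alpha)\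 \forall\alpha\}$, $C_{n,i}=\{x\in C_n:x(g)=i\ \forall g\in J(n)\}$. For $1\le i\le r$, $k\ge0$: $Z_{i,k}=\bigcup_{v\in D_{i+kr}}\sigma^{v^{-1}}C_{i+kr,i}$, and $A_i=\bigcap_{g\in G}\bigcup_{k\ge0}\bigcap_{l\ge k}\sigma^g(Z_{i,l})$. The $G$-odometer is $\{(x_n)\in\prod_nG/\Gamma_n: x_{n+1}\mapsto x_n$ under canonical projections$\}$. Measure conjugacy: a bimeasurable bijection between invariant conull subsets intertwining the actions and pushing one measure to the other. *)

From HB Require Import structures.
From mathcomp Require Import all_boot all_order all_algebra.
From mathcomp Require Import boolp classical_sets functions cardinality reals ereal.
From mathcomp Require Import measure probability.

Set Implicit Arguments.
Unset Strict Implicit.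
Unset Printing Implicit Defensive.

Local Open Scope classical_set_scope.
Local Open Scope group_scope.

Section GroupNotions.
Variable G : groupType.

Definition is_subgroup (H : set G) : Prop :=
  H 1 /\ (forall x y, H x -> H y -> H (x * y^-1)).

Definition is_normal (H : set G) : Prop :=
  forall g h, H h -> H (g^-1 * h * g).

Definition lcoset (g : G) (H : set G) : set G := (fun h => g * h) @` H.

Definition setmulg (A H : set G) : set G := [set a * h | a in A & h in H].

Definition finite_index (H : set G) : Prop :=
  finite_set (range (fun g => lcoset g H)).

Definition index_ge3 (K H : set G) : Prop :=
  exists a b c, [/\ K a, K b & K c] /\
    [/\ lcoset a H <> lcoset b H, lcoset a H <> lcoset c H & lcoset b H <> lcoset c H].

Definition residually_finite : Prop :=
  forall g, g <> 1 -> exists H : set G,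
    [/\ is_subgroup H, is_normal H, finite_index H & ~ H g].

Definition transversal (D H : set G) : Prop :=
  forall g, exists! d, D d /\ lcoset d H = lcoset g H.

Definition setting (Gam D : nat -> set G) : Prop :=
  [/\ [/\ Gam 0 = setT,
      (forall i, Gam i.+1 `<` Gam i),
      (forall i, (1 <= i)%N -> [/\ is_subgroup (Gam i), is_normal (Gam i) & finite_index (Gam i)]) &
      \bigcap_i Gam i = [set 1]],
      [/\ D 0 = [set 1],
      (forall i, finite_set (D i) /\ transversal (D i) (Gam i)),
      (forall i, D i 1 /\ D i `<=` D i.+1) &
      \bigcup_i D i = setT] &
      [/\ (forall i j, (1 <= i)%N -> (i < j)%N ->
             D j = \bigcup_(v in D j `&` Gam i) lcoset v (D i)),
          (forall i, (1 <= i)%N -> index_ge3 setT (Gam i)) &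
          (forall i, (1 <= i)%N -> index_ge3 (Gam i) (Gam i.+1))]].

(** The sets J(m): J(0) = {1}, J(m) = D_m \ U_{i<m} J(i) Gamma_{i+1}.
    JU m = (J m, U_{i<m} J(i) Gamma_{i+1}). *)
Fixpoint JU (Gam D : nat -> set G) (m : nat) : set G * set G :=
  match m with
  | 0 => ([set 1], set0)
  | m'.+1 => let p := JU Gam D m' in
             let U := p.2 `|` setmulg p.1 (Gam m) in
             (D m `\` U, U)
  end.

Definition J (Gam D : nat -> set G) (m : nat) : set G := (JU Gam D m).1.

(** symbols: Sigma = {1,..,r} (as natural numbers); alpha_m in Sigma, alpha_m = m mod r *)
Definition alpha (r m : nat) : nat := if (m %% r == 0)%N then r else (m %% r)%N.

Definition shift (g : G) (x : G -> nat) : G -> nat := fun h => x (g^-1 * h).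

(** orbit closure of eta in the product (discrete) topology: x is in the closure
    iff on every finite set of coordinates it agrees with some translate of eta *)
Definition orbit_closure (eta : G -> nat) : set (G -> nat) :=
  [set x | forall F : set G, finite_set F ->
             exists g, forall h, F h -> shift g eta h = x h].

Definition Per (x : G -> nat) (H : set G) (a : nat) : set G :=
  [set g | forall c, H c -> x (c * g) = a].

Definition Cset (Gam : nat -> set G) (r : nat) (eta : G -> nat) (n : nat) : set (G -> nat) :=
  [set x | orbit_closure eta x /\
     forall a, (1 <= a <= r)%N -> Per x (Gam n) a = Per eta (Gam n) a].

Definition Cset2 (Gam D : nat -> set G) (r : nat) (eta : G -> nat) (n i : nat) : set (G -> nat) :=
  [set x | Cset Gam r eta n x /\ forall g, J Gam D n g -> x g = i].

Definition Zset (Gam D : nat -> set G) (r : nat) (eta : G -> nat) (i k : nat) : set (G -> nat) :=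
  \bigcup_(v in D (i + k * r)%N)
     (shift v^-1) @` Cset2 Gam D r eta (i + k * r)%N i.

Definition Aset (Gam D : nat -> set G) (r : nat) (eta : G -> nat) (i : nat) : set (G -> nat) :=
  \bigcap_(g in setT)
    \bigcup_(k in setT) \bigcap_(l in [set l | (k <= l)%N])
        (shift g) @` Zset Gam D r eta i l.

(** Borel sigma-algebra of the product topology on nat^G (G countable, nat discrete):
    generated by the cylinders {x | x g = a}. *)
Definition cylG : set (set (G -> nat)) :=
  [set A | exists g a, A = [set x | x g = a]].
Definition configT := g_sigma_algebraType cylG.

(** G-odometer: sequences (x_n) of cosets x_n in G/Gamma_n, compatible with the
    canonical projections (x_{n+1} is contained in x_n). *)
Definition odometer (Gam : nat -> set G) : set (nat -> set G) :=
  [set o | (forall n, exists g, o n = lcoset g (Gam n)) /\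
           (forall n, o n.+1 `<=` o n)].

Definition odo_act (g : G) (o : nat -> set G) : nat -> set G :=
  fun n => lcoset g (o n).

(** Borel sigma-algebra of the product of the discrete spaces G/Gamma_n:
    generated by the cylinders {o | o n = C}. *)
Definition cylO : set (set (nat -> set G)) :=
  [set A | exists n (C : set G), A = [set o | o n = C]].
Definition odoT := g_sigma_algebraType cylO.

End GroupNotions.

Definition measure_conjugate (G : groupType) (R : realType)
  d1 d2 (T1 : measurableType d1) (T2 : measurableType d2)
  (S1 : set T1) (a1 : G -> T1 -> T1) (m1 : set T1 -> \bar R)
  (S2 : set T2) (a2 : G -> T2 -> T2) (m2 : set T2 -> \bar R) : Prop :=
  exists (X0 : set T1) (Y0 : set T2) (f : T1 -> T2),
    [/\ [/\ measurable X0, X0 `<=` S1, m1 (S1 `\` X0) = 0%E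
           & forall g x, X0 x -> X0 (a1 g x)],
        [/\ measurable Y0, Y0 `<=` S2, m2 (S2 `\` Y0) = 0%E
           & forall g y, Y0 y -> Y0 (a2 g y)],
        [/\ set_bij X0 Y0 f, measurable_fun X0 f &
            forall A, measurable A -> measurable (f @` (X0 `&` A))],
        (forall g x, X0 x -> f (a1 g x) = a2 g (f x)) &
        (forall B, measurable B -> m2 (Y0 `&` B) = m1 (X0 `&` f @^-1` B))].

(* The factor map sends a configuration [x] to the sequence of cosets [w * Gam n] such
   that, at every level [n] and for every symbol [a], the [Gam n]-periodic [a]-part of
   [x] is the [w]-translate of that of [eta]. It is well defined on [A_i] because the
   stabiliser of the periodic parts of [eta] at level [n] is exactly [Gam n]: an
   element moving a hole of [J k] out of its [Gam k.+1]-coset would carry the symbol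
   [alpha (k+1)] onto a hole of [J (k+1)], where [eta] is [alpha (k+2)]. Conversely a
   point of the odometer determines the periodic parts, and on [A_i] every remaining
   position carries the symbol [i]; this gives a measurable, equivariant inverse.
   Finally, invariance forces every cylinder of level [N] of the odometer to have
   measure [1 / #|D N|], so the odometer has a unique invariant probability measure,
   which must be the push-forward of [mu]. *)

From HB Require Import structures.
From mathcomp Require Import all_boot all_order all_algebra.
From mathcomp Require Import boolp classical_sets functions cardinality reals ereal.
From mathcomp Require Import measure probability fsbigop.
From mathcomp Require Import zify.

Set Implicit Arguments.
Unset Strict Implicit.
Unset Printing Implicit Defensive.
Import Order.TTheory GRing.Theory Num.Theory.
Local Open Scope classical_set_scope.
Local Open Scope group_scope.
Ltac group_simpl :=
  rewrite ?invgM ?invgK ?mulgA; rewrite ?(mulgK, mulgVK, mulgV, mulVg, mul1g, mulg1).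

Section Cosets.
Variable G : groupType.
Implicit Types (a b x y : G) (S H : set G).

Lemma lcosetP a S x : lcoset a S x <-> S (a^-1 * x).
Proof.
split; first by case=> s Ss <-; rewrite mulKg.
by move=> Sx; exists (a^-1 * x) => //; rewrite mulVKg.
Qed.

Lemma lcosetE a S : lcoset a S = [set x | S (a^-1 * x)].
Proof. by apply/seteqP; split => x /lcosetP. Qed.

Lemma lcosetM a b S : lcoset a (lcoset b S) = lcoset (a * b) S.
Proof. by rewrite !lcosetE; apply/seteqP; split => x /=; rewrite invgM mulgA. Qed.

Lemma lcoset1 S : lcoset 1 S = S.
Proof. by rewrite lcosetE; apply/seteqP; split => x /=; rewrite invg1 mul1g. Qed.

Lemma lcoset_eqVl a S S' : lcoset a S = S' <-> S = lcoset a^-1 S'.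
Proof.
split => [<-|->]; first by rewrite lcosetM mulVg lcoset1.
by rewrite lcosetM mulgV lcoset1.
Qed.

Lemma subgroup1 H : is_subgroup H -> H 1. Proof. by case. Qed.

Lemma subgroupV H x : is_subgroup H -> H x -> H x^-1.
Proof. by move=> [H1 HM] Hx; have := HM _ _ H1 Hx; rewrite mul1g. Qed.

Lemma subgroupM H x y : is_subgroup H -> H x -> H y -> H (x * y).
Proof. by move=> sH Hx Hy; have := sH.2 _ _ Hx (subgroupV sH Hy); rewrite invgK. Qed.

Lemma lcoset_refl H a : is_subgroup H -> lcoset a H a.
Proof. by move=> sH; apply/lcosetP; rewrite mulVg; exact: subgroup1. Qed.

Lemma lcoset_eqP H a b : is_subgroup H -> lcoset a H = lcoset b H <-> H (a^-1 * b).
Proof.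
move=> sH; split => [e|Hab]; first by have := lcoset_refl b sH; rewrite -e => /lcosetP.
rewrite !lcosetE; apply/seteqP; split => x /= Hx.
  by have := subgroupM sH (subgroupV sH Hab) Hx; group_simpl.
by have := subgroupM sH Hab Hx; group_simpl.
Qed.

Lemma lcoset_eq_mem H a x : is_subgroup H -> lcoset a H x -> lcoset a H = lcoset x H.
Proof. by move=> sH /lcosetP Hx; apply/(lcoset_eqP _ _ sH). Qed.

End Cosets.

Section MeasurableFormulas.
Context d (T : measurableType d).
Implicit Types (A B : T -> Prop).

Lemma measurable_setP (Q : Prop) : measurable [set _ : T | Q].
Proof.
have [q|nq] := pselect Q.
  by rewrite (_ : [set _ | Q] = setT) //; apply/seteqP; split.
by rewrite (_ : [set _ | Q] = set0) //; apply/seteqP; split.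
Qed.

Lemma measurable_setImp A B : measurable [set x | A x] -> measurable [set x | B x] ->
  measurable [set x | A x -> B x].
Proof.
move=> mA mB; rewrite (_ : [set x | A x -> B x] = [set x | ~ A x] `|` [set x | B x]).
  by apply: measurableU => //; exact: measurableC.
apply/seteqP; split => x /=; last by case => // nA /nA.
by have [Ax /(_ Ax)|] := pselect (A x); [right|left].
Qed.

Lemma measurable_setIff A B : measurable [set x | A x] -> measurable [set x | B x] ->
  measurable [set x | A x <-> B x].
Proof. by move=> mA mB; apply: measurableI; apply: measurable_setImp. Qed.

Lemma measurable_setEx (U : Type) (P : U -> T -> Prop) : countable [set: U] ->
  (forall u, measurable [set x | P u x]) -> measurable [set x | exists u, P u x].
Proof.
move=> cU mP; rewrite (_ : [set x | exists u, P u x] = \bigcup_u [set x | P u x]).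
  exact: countable_bigcupT_measurable.
by apply/seteqP; split => x /=; [case=> u Pu; exists u|case=> u _ Pu; exists u].
Qed.

Lemma measurable_setAll (U : Type) (P : U -> T -> Prop) : countable [set: U] ->
  (forall u, measurable [set x | P u x]) -> measurable [set x | forall u, P u x].
Proof.
move=> cU mP; rewrite (_ : [set x | forall u, P u x] = ~` [set x | exists u, ~ P u x]).
  by apply: measurableC; apply: measurable_setEx => // u; exact: measurableC (mP u).
apply/seteqP; split => x /=; first by move=> H [u]; apply; apply: H.
by move=> H u; apply: contrapT => nP; apply: H; exists u.
Qed.

End MeasurableFormulas.

Lemma measurable_preimageT d d' (T : measurableType d) (T' : measurableType d')
  (f : T -> T') (B : set T') : measurable_fun setT f -> measurable B ->
  measurable (f @^-1` B).
Proof. by move=> mf mB; rewrite -[_ @^-1` _]setTI; exact: mf. Qed.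

Section FirstSatisfying.
Variable A : eqType.
Implicit Types (P : A -> Prop) (s : seq A).

Definition first_sat P s (dflt : A) : A :=
  foldr (fun a acc => if `[< P a >] then a else acc) dflt s.

Lemma first_satP P s dflt :
  (exists a, [/\ a \in s, P a & first_sat P s dflt = a]) \/
  (first_sat P s dflt = dflt /\ forall a, a \in s -> ~ P a).
Proof.
elim: s => [|b s IH] /=; first by right.
case: asboolP => Pb; first by left; exists b; rewrite mem_head.
case: IH => [[a [ains Pa ->]]|[-> nP]].
  by left; exists a; split => //; rewrite in_cons ains orbT.
by right; split => // a; rewrite in_cons => /orP[/eqP ->|] //; exact: nP.
Qed.

Lemma measurable_first_sat d (T : measurableType d) (Q : A -> T -> Prop) s dflt b :
  (forall a, measurable [set x | Q a x]) ->
  measurable [set x | first_sat (Q^~ x) s dflt = b].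
Proof.
move=> mQ; elim: s => [|a s IH] /=; first exact: measurable_setP.
rewrite (_ : [set x | _] = [set x | Q a x /\ a = b] `|`
                          [set x | ~ Q a x /\ first_sat (Q^~ x) s dflt = b]).
  by apply: measurableU; apply: measurableI => //;
    [exact: mQ|exact: measurable_setP|exact: measurableC (mQ a)].
by apply/seteqP; split => x /=; case: asboolP => q; tauto.
Qed.

End FirstSatisfying.

Section ProbabilityFacts.
Context d (T : measurableType d) (R : realType) (P : probability T R).
Local Open Scope ereal_scope.

Lemma probability_setC_eq0 E : measurable E -> P E = 1 -> P (~` E) = 0.
Proof. by move=> mE PE; rewrite probability_setC // PE subee. Qed.

Lemma probability_setD_full S E : measurable S -> measurable E -> P E = 1 ->
  P (S `\` E) = 0.
Proof.
move=> mS mE PE; apply: (@subset_measure0 _ _ _ P _ (~` E)).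
- exact: measurableD.
- exact: measurableC.
- by move=> x [].
- exact: probability_setC_eq0.
Qed.

Lemma probability_setI_full E B : measurable E -> P E = 1 -> measurable B ->
  P (B `&` E) = P B.
Proof.
move=> mE PE mB; rewrite [RHS](measureDI P mB mE) -[X in X + _]/(P (B `\` E)).
by rewrite probability_setD_full ?add0e.
Qed.

Lemma probability_full_subset A B : measurable A -> measurable B -> A `<=` B ->
  P A = 1 -> P B = 1.
Proof.
move=> mA mB AB PA; apply/le_anti/andP; split; first exact: probability_le1.
by rewrite -PA; apply: le_measure; rewrite ?inE.
Qed.

End ProbabilityFacts.

Section Actions.
Variable G : groupType.
Implicit Types (a b g : G) (z : G -> nat).

Lemma shift1 z : shift 1 z = z.
Proof. by apply: funext => h; rewrite /shift invg1 mul1g. Qed.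

Lemma shiftM a b z : shift a (shift b z) = shift (a * b) z.
Proof. by apply: funext => h; rewrite /shift invgM mulgA. Qed.

Lemma shiftK a z : shift a^-1 (shift a z) = z.
Proof. by rewrite shiftM mulVg shift1. Qed.

Lemma shiftKV a z : shift a (shift a^-1 z) = z.
Proof. by rewrite shiftM mulgV shift1. Qed.

Lemma image_shiftP a (A : set (G -> nat)) z : (shift a @` A) z <-> A (shift a^-1 z).
Proof.
split => [[y Ay <-]|Az]; first by rewrite shiftK.
by exists (shift a^-1 z) => //; rewrite shiftKV.
Qed.

Lemma orbit_closure_shift eta g z : orbit_closure eta z -> orbit_closure eta (shift g z).
Proof.
move=> Oz F fF; have [g' Hg'] := Oz ((fun h => g^-1 * h) @` F) (finite_image _ fF).
exists (g * g') => h Fh; have := Hg' (g^-1 * h) (ex_intro2 _ _ h Fh erefl).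
by rewrite /shift => <-; rewrite invgM mulgA.
Qed.

Lemma odo_act1 (o : nat -> set G) : odo_act 1 o = o.
Proof. by apply: funext => n; rewrite /odo_act lcoset1. Qed.

Lemma odo_actM a b (o : nat -> set G) : odo_act a (odo_act b o) = odo_act (a * b) o.
Proof. by apply: funext => n; rewrite /odo_act lcosetM. Qed.

Lemma odometer_act (Gam : nat -> set G) g o : odometer Gam o -> odometer Gam (odo_act g o).
Proof.
move=> [Ho Hdecr]; split => n.
  by have [w on] := Ho n; exists (g * w); rewrite /odo_act on lcosetM.
by move=> x [y oy <-]; exists y => //; exact: Hdecr.
Qed.

Lemma odometer_decr (Gam : nat -> set G) o m n : odometer Gam o -> (m <= n)%N ->
  o n `<=` o m.
Proof.
move=> [_ Hdecr] /subnK <-; elim: (n - m)%N => [|j IH] //.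
by rewrite addSn; exact: subset_trans (Hdecr _) IH.
Qed.

End Actions.

Section Periods.
Variable G : groupType.
Variables H K : set G.
Hypotheses (sH : is_subgroup H) (nH : is_normal H).
Hypotheses (sK : is_subgroup K) (KH : K `<=` H).
Implicit Types (a : nat) (c g s w : G) (z : G -> nat).

Lemma Per_mull z a c g : Per z H a g -> H c -> Per z H a (c * g).
Proof. by move=> P Hc c' Hc'; rewrite mulgA; apply: P; exact: subgroupM. Qed.

Lemma Per_val z a g : Per z H a g -> z g = a.
Proof. by move=> /(_ 1 (subgroup1 sH)); rewrite mul1g. Qed.

Lemma Per_shift w z a : Per (shift w z) H a = lcoset w (Per z H a).
Proof.
rewrite lcosetE; apply/seteqP; split => g /= P c Hc.
  by have := P _ (nH w^-1 Hc); rewrite /shift; group_simpl.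
by have := P _ (nH w Hc); rewrite /shift; group_simpl.
Qed.

Lemma lcoset_Per s z a : H s -> lcoset s (Per z H a) = Per z H a.
Proof.
move=> Hs; rewrite lcosetE; apply/seteqP; split => g /= P.
  by have := Per_mull P Hs; group_simpl.
by apply: Per_mull => //; exact: subgroupV.
Qed.

Lemma Per_sub_subgroup z a :
  Per z H a = [set g | forall c, H c -> Per z K a (c * g)].
Proof.
apply/seteqP; split => g /= P; last first.
  by move=> c /P /(_ 1 (subgroup1 sK)); rewrite mul1g.
by move=> c Hc c' Kc'; rewrite mulgA; apply: P; apply: subgroupM => //; exact: KH.
Qed.

Lemma Per_lcoset_sub_subgroup z eta w a :
  Per z K a = lcoset w (Per eta K a) -> Per z H a = lcoset w (Per eta H a).
Proof.
move=> e; rewrite (Per_sub_subgroup z) (Per_sub_subgroup eta) e !lcosetE.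
apply/seteqP; split => g /= P c Hc.
  by have := P _ (nH w^-1 Hc); group_simpl.
by have := P _ (nH w Hc); group_simpl.
Qed.

End Periods.

Section ToeplitzStructure.
Variable G : groupType.
Variables (Gam D : nat -> set G) (r : nat) (eta : G -> nat).
Hypothesis HGD : setting Gam D.
Hypothesis r_gt1 : (1 < r)%N.
Hypothesis eta_J : forall m h g, J Gam D m h -> Gam m.+1 g -> eta (h * g) = alpha r m.+1.
Implicit Types (g h x y c s w : G) (n m k : nat).

Lemma Gam0 : Gam 0 = setT. Proof. by case: HGD => [[]]. Qed.

Lemma Gam_subgroup n : is_subgroup (Gam n).
Proof.
case: n => [|n]; first by rewrite Gam0.
by case: HGD => [[_ _ H _] _ _]; case: (H n.+1 isT).
Qed.

Lemma Gam1 n : Gam n 1. Proof. exact: subgroup1 (Gam_subgroup n). Qed.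
Lemma GamV n x : Gam n x -> Gam n x^-1. Proof. exact: subgroupV (Gam_subgroup n). Qed.
Lemma GamM n x y : Gam n x -> Gam n y -> Gam n (x * y).
Proof. exact: subgroupM (Gam_subgroup n). Qed.

Lemma Gam_normal n : is_normal (Gam n).
Proof.
case: n => [|n]; first by rewrite Gam0.
by case: HGD => [[_ _ H _] _ _]; case: (H n.+1 isT).
Qed.

Lemma GamJ n g x : Gam n x -> Gam n (g^-1 * x * g). Proof. exact: Gam_normal. Qed.

Lemma GamJV n g x : Gam n x -> Gam n (g * x * g^-1).
Proof. by move=> /(GamJ g^-1); rewrite invgK. Qed.

Lemma Gam_decr m n : (m <= n)%N -> Gam n `<=` Gam m.
Proof.
move=> /subnK <-; elim: (n - m)%N => [|k IH] //.
case: HGD => [[_ Hd _ _] _ _].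
by rewrite addSn; apply: subset_trans IH; case: (Hd (k + m)%N).
Qed.

Lemma D_finite n : finite_set (D n).
Proof. by case: HGD => [_ [_ /(_ n) []]]. Qed.

Lemma D1 n : D n 1.
Proof. by case: HGD => [_ [_ _ /(_ n) []]]. Qed.

Lemma D_rep n g : exists c, D n c /\ Gam n (c^-1 * g).
Proof.
case: HGD => [_ [_ Ht _ _] _]; case: (Ht n) => _ /(_ g) [c [[Dc e] _]].
by exists c; split => //; apply/(lcoset_eqP _ _ (Gam_subgroup n)).
Qed.

Lemma lcoset_D_rep n g : exists c, D n c /\ lcoset g (Gam n) = lcoset c (Gam n).
Proof.
have [c [Dc Gc]] := D_rep n g; exists c; split => //.
by apply/(lcoset_eqP _ _ (Gam_subgroup n)); have := GamV Gc; group_simpl.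
Qed.

Lemma D_uniq n c c' : D n c -> D n c' -> Gam n (c^-1 * c') -> c = c'.
Proof.
case: HGD => [_ [_ Ht _ _] _]; case: (Ht n) => _ /(_ c) [e [_ He]] Dc Dc' Gcc.
rewrite -(He c) // -(He c') //; split => //.
by apply/(lcoset_eqP _ _ (Gam_subgroup n)); have := GamV Gcc; group_simpl.
Qed.

Definition U n : set G := (JU Gam D n).2.

Lemma JS n : J Gam D n.+1 = D n.+1 `\` U n.+1. Proof. by []. Qed.

Lemma J_D n h : J Gam D n h -> D n h.
Proof.
case: n => [|n]; last by case.
by case: HGD => [_ [-> _ _ _] _].
Qed.

Lemma UP n u : U n u <->
  exists k j y, [/\ (k < n)%N, J Gam D k j, Gam k.+1 y & u = j * y].
Proof.
elim: n u => [|n IH] u; first by split=> // -[k [j [y [] //]]].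
rewrite /U /=; split.
  case=> [/IH [k [j [y [lt Jj Gy ->]]]]|[j Jj [y Gy <-]]].
    by exists k, j, y; split => //; apply: ltnW.
  by exists n, j, y.
move=> [k [j [y [+ Jj Gy ->]]]]; rewrite ltnS leq_eqVlt => /orP[/eqP ek|lt].
  by right; subst k; exists j => //; exists y.
by left; apply/IH; exists k, j, y.
Qed.

Lemma UM n u y : U n u -> Gam n y -> U n (u * y).
Proof.
move=> /UP [k [j [z [lt Jj Gz ->]]]] Gy; apply/UP; exists k, j, (z * y).
by split => //; [apply: GamM => //; exact: (Gam_decr lt)|rewrite mulgA].
Qed.

Lemma J_notU n h : J Gam D n h -> ~ U n h.
Proof. by case: n => [_ []|n []]. Qed.

Lemma J_succ k h y c : J Gam D k h -> Gam k (h^-1 * y) -> ~ Gam k.+1 (h^-1 * y) ->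
  D k.+1 c -> Gam k.+1 (c^-1 * y) -> J Gam D k.+1 c.
Proof.
move=> Jh Gky nGky Dc Gcy; have Gcy' := Gam_decr (leqnSn k) Gcy.
split => // -[Uc|[j Jj [z Gz ejc]]].
  apply: (J_notU Jh); have := UM Uc (GamM Gcy' (GamV Gky)); by group_simpl.
have Gz' := Gam_decr (leqnSn k) Gz.
have ejh : j = h.
  apply: (D_uniq (J_D Jj) (J_D Jh)).
  have -> : j^-1 * h = z * ((c^-1 * y) * (h^-1 * y)^-1) by rewrite -ejc; group_simpl.
  by apply: GamM => //; apply: GamM => //; exact: GamV.
apply: nGky; have -> : h^-1 * y = z * (c^-1 * y) by rewrite -ejc -ejh; group_simpl.
exact: GamM.
Qed.

Lemma J_nonempty k : exists h, J Gam D k h.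
Proof.
elim: k => [|k [h Jh]]; first by exists 1.
have [y [Gy nGy]] : exists y, Gam k y /\ ~ Gam k.+1 y.
  case: HGD => [[_ Hd _ _] _ _]; case: (Hd k) => _ nsub.
  apply: contrapT => nE; apply: nsub => y Gy; apply: contrapT => nG; apply: nE; by exists y.
have [c [Dc Gc]] := D_rep k.+1 (h * y).
by exists c; apply: (J_succ Jh _ _ Dc Gc); rewrite mulKg.
Qed.

Lemma alpha_range m : (1 <= alpha r m <= r)%N.
Proof. by rewrite /alpha; case: ifP => [|/negbT]; have := ltn_pmod m (ltnW r_gt1); lia. Qed.

Lemma alpha_succ_neq m : alpha r m.+1 <> alpha r m.+2.
Proof.
have H2 : (m.+2 %% r = (m.+1 %% r).+1 %% r)%N by rewrite -addn1 -modnDml addn1.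
rewrite /alpha H2; have := ltn_pmod m.+1 (ltnW r_gt1); move: (m.+1 %% r)%N => q qr.
case: (ltngtP q.+1 r) => [lt|gt|eq]; last by rewrite eq modnn /=; case: eqP; lia.
- by rewrite (modn_small lt); case: eqP; case: eqP; lia.
- lia.
Qed.

Implicit Types (z : G -> nat) (a : nat).

Lemma J_coset_Per k n h g : (k < n)%N -> J Gam D k h -> Gam k.+1 (h^-1 * g) ->
  Per eta (Gam n) (alpha r k.+1) g.
Proof.
move=> kn Jh Gg c Gc.
have -> : c * g = h * ((h^-1 * c * h) * (h^-1 * g)) by group_simpl.
by apply: eta_J Jh _; apply: GamM => //; apply: (Gam_decr kn); exact: GamJ.
Qed.

Lemma U_Per n u : U n u -> exists a, (1 <= a <= r)%N /\ Per eta (Gam n) a u.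
Proof.
move=> /UP [k [j [y [lt Jj Gy ->]]]]; exists (alpha r k.+1).
by split; [exact: alpha_range|apply: (J_coset_Per lt Jj); rewrite mulKg].
Qed.

(* If [s] is in [Gam k] but moves a hole [h] of [J k] off its [Gam k.+1]-coset, then
   [s * h] lies in the [Gam k.+1]-coset of a hole of [J k.+1], where [eta] is
   [alpha r k.+2], whereas [s] maps the [alpha r k.+1]-periodic part to itself. *)
Lemma Per_eta_stab n s : (forall a, (1 <= a <= r)%N ->
    lcoset s (Per eta (Gam n) a) = Per eta (Gam n) a) -> Gam n s.
Proof.
move=> Hst; suff : forall k, (k <= n)%N -> Gam k s by apply.
elim=> [|k IH] kn; first by rewrite Gam0.
have [h Jh] := J_nonempty k.
suff Gh : Gam k.+1 (h^-1 * (s * h)) by have := GamJV h Gh; group_simpl.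
apply: contrapT => nG.
have Gk : Gam k (h^-1 * (s * h)) by rewrite mulgA; exact/GamJ/IH/ltnW.
have [c [Dc Gc]] := D_rep k.+1 (s * h).
have Jc := J_succ Jh Gk nG Dc Gc.
have := eta_J Jc (Gam1 k.+2); rewrite mulg1 => eta_c.
have Pc : Per eta (Gam n) (alpha r k.+1) c.
  rewrite -Hst; last exact: alpha_range.
  apply/lcosetP; apply: (J_coset_Per kn Jh).
  have -> : h^-1 * (s^-1 * c) = (c^-1 * (s * h))^-1 by group_simpl.
  exact: GamV.
by apply: (@alpha_succ_neq k); rewrite -eta_c (Per_val (Gam_subgroup n) Pc).
Qed.

Definition factor z n : set G := [set w | forall a, (1 <= a <= r)%N ->
  Per z (Gam n) a = lcoset w (Per eta (Gam n) a)].

Lemma factor_lcoset z n w : factor z n w -> factor z n = lcoset w (Gam n).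
Proof.
move=> Hw; rewrite lcosetE; apply/seteqP; split => w' /=.
  move=> Hw'; apply: Per_eta_stab => a ra.
  by rewrite -lcosetM; apply/esym/lcoset_eqVl; rewrite -(Hw a ra) -(Hw' a ra).
move=> Gw a ra; rewrite Hw //.
have -> : w' = w * (w^-1 * w') by group_simpl.
by rewrite -lcosetM [lcoset (w^-1 * w') _]lcoset_Per //; exact: Gam_subgroup.
Qed.

Lemma factor_shift g z n : factor (shift g z) n = lcoset g (factor z n).
Proof.
rewrite lcosetE; apply/seteqP; split => w /= P a ra; have := P a ra;
  rewrite Per_shift; try exact: Gam_normal.
  by rewrite lcoset_eqVl lcosetM.
by move=> ->; rewrite lcosetM mulVKg.
Qed.

Lemma factor_decr z m n : (m <= n)%N -> factor z n `<=` factor z m.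
Proof.
move=> mn w Hw a ra; apply: Per_lcoset_sub_subgroup (Hw a ra).
- exact: Gam_subgroup.
- exact: Gam_normal.
- exact: Gam_subgroup.
- exact: Gam_decr.
Qed.

Lemma factor_act g z : factor (shift g z) = odo_act g (factor z).
Proof. by apply: funext => n; rewrite factor_shift. Qed.

Variable i : nat.

Lemma AsetP z : Aset Gam D r eta i z <->
  forall g, exists k, forall l, (k <= l)%N ->
    exists v, D (i + l * r)%N v /\ Cset2 Gam D r eta (i + l * r)%N i (shift (v * g^-1) z).
Proof.
split => [A g|A g _].
  have [k _ Hk] := A g I; exists k => l kl.
  have /image_shiftP [v Dv /image_shiftP] := Hk l kl.
  by rewrite invgK shiftM; exists v.
have [k Hk] := A g; exists k => // l kl; apply/image_shiftP.
have [v [Dv C]] := Hk l kl.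
by exists v => //; apply/image_shiftP; rewrite invgK shiftM.
Qed.

Lemma Aset_factor z m : Aset Gam D r eta i z -> exists w, factor z m w.
Proof.
move=> /AsetP /(_ 1) [k Hk].
have [v [Dv [[_ Cy] _]]] := Hk (maxn k m) (leq_maxl _ _).
rewrite invg1 mulg1 in Cy.
exists v^-1; apply: (@factor_decr _ _ (i + maxn k m * r)%N).
  by have := leq_maxr k m; nia.
move=> a ra; rewrite -(Cy a ra) Per_shift ?lcosetM ?mulVg ?lcoset1 //; exact: Gam_normal.
Qed.

Lemma factor_odometer z : Aset Gam D r eta i z -> odometer Gam (factor z).
Proof.
move=> Az; split => n; last exact: factor_decr.
by have [w Hw] := Aset_factor n Az; exists w; exact: factor_lcoset.
Qed.

Hypothesis i_range : (1 <= i <= r)%N.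

(* A point outside every periodic part of [z] is, far enough in the construction,
   a hole of some [J (i + l * r)] after translation, and there [z] takes the value [i]. *)
Lemma Aset_hole z h : Aset Gam D r eta i z ->
  (forall n a, (1 <= a <= r)%N -> ~ Per z (Gam n) a h) -> z h = i.
Proof.
move=> /AsetP /(_ h) [k Hk] nP.
have [v [Dv [[_ Cy] Jy]]] := Hk k (leqnn k).
move: Dv Cy Jy; case En: (i + k * r)%N => [|n]; first by lia.
move=> Dv Cy Jy.
have Jv : J Gam D n.+1 v.
  rewrite JS; split => // /U_Per [a [ra Pa]]; apply: (nP n.+1 a ra).
  move: Pa; rewrite -Cy // Per_shift => [/lcosetP|]; last exact: Gam_normal.
  by group_simpl.
by have := Jy v Jv; rewrite /shift; group_simpl.
Qed.

Definition coset_Per (o : nat -> set G) h a : Prop :=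
  exists n c, o n = lcoset c (Gam n) /\ Per eta (Gam n) a (c^-1 * h).

(* Reads a configuration off a point [o] of the odometer: [h] gets the symbol [a] if
   it lies in the translate by [o n] of the [a]-periodic part of [eta] at some level
   [n], and the symbol [i] otherwise. *)
Definition factor_inv (o : nat -> set G) : G -> nat :=
  fun h => first_sat (coset_Per o h) (iota 1 r) i.

Lemma coset_Per_act g o h a : coset_Per (odo_act g o) h a <-> coset_Per o (g^-1 * h) a.
Proof.
split=> -[n [c [e P]]]; exists n.
  exists (g^-1 * c); split; last by group_simpl.
  by rewrite -lcosetM -e /odo_act lcosetM mulVg lcoset1.
by exists (g * c); split; [rewrite /odo_act e lcosetM|move: P; group_simpl].
Qed.

Lemma factor_inv_act g o : factor_inv (odo_act g o) = shift g (factor_inv o).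
Proof.
apply: funext => h; rewrite /factor_inv /shift; congr first_sat.
by apply: funext => a; rewrite (propext (coset_Per_act g o h a)).
Qed.

Lemma factor_invK z : Aset Gam D r eta i z -> factor_inv (factor z) = z.
Proof.
move=> Az; apply: funext => h; rewrite /factor_inv.
case: (first_satP (coset_Per (factor z) h) (iota 1 r) i) => [[a [+ [n [c [fc Pc]]] ->]]|[-> nP]].
  rewrite mem_iota => ra; have : factor z n c by rewrite fc; exact/lcoset_refl/Gam_subgroup.
  have {}ra : (1 <= a <= r)%N by lia.
  move=> /(_ a ra) Pz.
  by apply/esym/(Per_val (Gam_subgroup n)); rewrite Pz; apply/lcosetP.
apply/esym/(Aset_hole Az) => n a ra Pz; have [w Hw] := Aset_factor n Az.
apply: (nP a); first by rewrite mem_iota; lia.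
exists n, w; split; first exact: factor_lcoset.
by move: Pz; rewrite (Hw a ra) => /lcosetP.
Qed.

End ToeplitzStructure.

Section Measurability.
Variable G : groupType.
Hypothesis G_countable : countable [set: G].
Implicit Types (H : set G) (a : nat).

Lemma measurable_cylG g b : measurable [set x : configT G | x g = b].
Proof. by apply: sub_sigma_algebra; exists g, b. Qed.

Lemma measurable_cylO n (C : set G) : measurable [set o : odoT G | o n = C].
Proof. by apply: sub_sigma_algebra; exists n, C. Qed.

Lemma measurable_Per H a h : measurable [set x : configT G | Per x H a h].
Proof.
apply: (measurable_setAll (P := fun c (x : configT G) => H c -> x (c * h) = a)) => // c.
by apply: measurable_setImp; [exact: measurable_setP|exact: measurable_cylG].
Qed.

Lemma measurable_Per_eq H a (S : set G) : measurable [set x : configT G | Per x H a = S].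
Proof.
rewrite (_ : [set x | _] = [set x : configT G | forall h, Per x H a h <-> S h]).
  apply: measurable_setAll => // h.
  by apply: measurable_setIff; [exact: measurable_Per|exact: measurable_setP].
apply/seteqP; split => x /=; first by move=> ->.
by move=> HS; apply/seteqP; split => h /HS.
Qed.

Lemma measurable_shift w : measurable_fun setT (shift w : configT G -> configT G).
Proof.
apply: (@measurability _ _ (configT G) (configT G) setT _ (@cylG G)) => //.
move=> _ [_ [g [b ->]] <-]; rewrite setTI.
by rewrite (_ : _ @^-1` _ = [set x : configT G | x (w^-1 * g) = b]) //; exact: measurable_cylG.
Qed.

Lemma measurable_preimage_shift w (A : set (configT G)) : measurable A ->
  measurable [set x : configT G | A (shift w x)].
Proof. by move=> mA; have := measurable_shift w measurableT mA; rewrite setTI. Qed.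

(* Enumerating [G] as [e 0, e 1, ...], it suffices to test agreement with a translate
   of [eta] on the initial segments [e 0, ..., e N]. *)
Lemma measurable_orbit_closure eta : measurable (orbit_closure eta : set (configT G)).
Proof.
have /countable_injP [f finj] := G_countable.
pose e n := xget 1 [set g | f g = n].
have eK g : e (f g) = g.
  have : [set g' | f g' = f g] (e (f g)) by apply: xgetPex; exists g.
  by move=> /= efg; apply: finj; rewrite ?in_setE.
rewrite (_ : orbit_closure eta = [set x : configT G | forall N, exists g,
    forall k, (k <= N)%N -> x (e k) = shift g eta (e k)]).
  apply: measurable_setAll => [|N]; first exact: countableP.
  apply: measurable_setEx => // g; apply: measurable_setAll => [|k]; first exact: countableP.
  by apply: measurable_setImp; [exact: measurable_setP|exact: measurable_cylG].
apply/seteqP; split => x /= H.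
  move=> N; have [g Hg] := H [set e k | k in `I_N.+1] (finite_image _ (finite_II _)).
  by exists g => k kN; rewrite Hg //; exists k => //=; rewrite /= ltnS.
move=> F /finite_seqP [s ->]; have [g Hg] := H (\max_(h <- s) f h)%N; exists g => h hs.
have := Hg (f h) (@leq_bigmax_seq _ s xpredT (fun h => f h) h hs isT).
by rewrite eK => ->.
Qed.

Lemma measurable_odometer (Gam : nat -> set G) : measurable (odometer Gam : set (odoT G)).
Proof.
rewrite (_ : odometer Gam = [set o : odoT G | forall n, exists c c',
   o n = lcoset c (Gam n) /\ o n.+1 = lcoset c' (Gam n.+1) /\
   lcoset c' (Gam n.+1) `<=` lcoset c (Gam n)]).
  apply: measurable_setAll => [|n]; first exact: countableP.
  apply: measurable_setEx => // c; apply: measurable_setEx => // c'.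
  apply: measurableI; first exact: measurable_cylO.
  by apply: measurableI; [exact: measurable_cylO|exact: measurable_setP].
apply/seteqP; split => o /=.
  move=> [Ho Hdecr] n; have [c on] := Ho n; have [c' on'] := Ho n.+1.
  by exists c, c'; rewrite -on -on'; split.
move=> H; split => n; first by have [c [c' [-> _]]] := H n; exists c.
by have [c [c' [-> [-> ?]]]] := H n.
Qed.

End Measurability.

Section OdometerMeasure.
Variable G : groupType.
Variables (Gam D : nat -> set G).
Hypothesis HGD : setting Gam D.
Hypothesis G_countable : countable [set: G].
Variable R : realType.
Local Open Scope ereal_scope.

Definition odo_cyl N c : set (odoT G) := [set o | odometer Gam o /\ o N = lcoset c (Gam N)].

Definition odo_constr N (M : nat -> bool) (C : nat -> set G) : set (odoT G) :=
  [set o | forall k, (k < N)%N -> M k -> o k = C k].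

Definition odo_constr_sets : set (set (odoT G)) :=
  [set A | A = set0 \/ exists N M C, A = odo_constr N M C].

Lemma measurable_odo_cyl N c : measurable (odo_cyl N c).
Proof. by apply: measurableI; [exact: measurable_odometer|exact: measurable_cylO]. Qed.

Lemma measurable_odo_constr N M C : measurable (odo_constr N M C).
Proof.
apply: measurable_setAll => [|k]; first exact: countableP.
apply: measurable_setImp; first exact: measurable_setP.
by apply: measurable_setImp; [exact: measurable_setP|exact: measurable_cylO].
Qed.

Lemma odo_cyl_lcoset N c o k : odo_cyl N c o -> (k <= N)%N -> o k = lcoset c (Gam k).
Proof.
move=> [Oo oN] kN; have [w ok] := Oo.1 k.
have : o k c by apply: (odometer_decr Oo kN); rewrite oN; exact/lcoset_refl/(Gam_subgroup HGD).
by rewrite ok => /(lcoset_eq_mem (Gam_subgroup HGD k)) ->.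
Qed.

Lemma odo_cyl_trivI N : trivIset (D N) (odo_cyl N).
Proof.
move=> c c' Dc Dc' [o [[_ e1] [_ e2]]]; apply: (D_uniq HGD Dc Dc').
by apply/(lcoset_eqP _ _ (Gam_subgroup HGD N)); rewrite -e1 -e2.
Qed.

Lemma odometer_cover N : odometer Gam = \bigcup_(c in D N) odo_cyl N c.
Proof.
apply/seteqP; split => o; last by move=> [c _ []].
move=> Oo; have [w on] := Oo.1 N; have [c [Dc e]] := lcoset_D_rep HGD N w.
by exists c => //; split => //; rewrite on.
Qed.

Lemma odo_cyl_sub_constr N M C c o : odo_constr N M C o -> odo_cyl N c o ->
  odo_cyl N c `<=` odo_constr N M C.
Proof.
move=> Ao Co o' Co' k kN Mk; rewrite -(Ao k kN Mk).
by rewrite (odo_cyl_lcoset Co (ltnW kN)) (odo_cyl_lcoset Co' (ltnW kN)).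
Qed.

Lemma odo_constr_sets_generate : @measurable _ (odoT G) = <<s odo_constr_sets >>.
Proof.
apply/seteqP; split => A.
  move=> mA; apply: mA; split; first exact: smallest_sigma_algebra.
  move=> _ [n [C ->]]; apply: sub_sigma_algebra; right.
  exists n.+1, (fun k => k == n), (fun _ => C); apply/seteqP; split => o /=.
    by move=> on k _ /eqP ->.
  by apply.
move=> sA; apply: sA; split; first exact: sigma_algebra_measurable.
by move=> _ [->|[N [M [C ->]]]]; [exact: measurable0|exact: measurable_odo_constr].
Qed.

Lemma odo_constr_sets_setI : setI_closed odo_constr_sets.
Proof.
move=> A B [->|[N1 [M1 [C1 ->]]]]; first by rewrite set0I; left.
move=> [->|[N2 [M2 [C2 ->]]]]; first by rewrite setI0; left.
have [[k [k1 k2 m1 m2 ne]]|agree] :=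
  pselect (exists k, [/\ (k < N1)%N, (k < N2)%N, M1 k, M2 k & C1 k <> C2 k]).
  left; apply/seteqP; split => // o [A1 A2].
  by apply: ne; rewrite -(A1 k k1 m1) -(A2 k k2 m2).
right; exists (maxn N1 N2), (fun k => ((k < N1)%N && M1 k) || ((k < N2)%N && M2 k)),
  (fun k => if (k < N1)%N && M1 k then C1 k else C2 k).
apply/seteqP; split => o /=.
  move=> [A1 A2] k _; case: ifP => [/andP[k1 m1] _|_ /= /andP[k2 m2]]; first exact: A1.
  exact: A2.
move=> H; split => k kN Mk.
  by have := H k; rewrite kN Mk /=; apply => //; rewrite leq_max kN.
have := H k; rewrite kN Mk orbT leq_max kN orbT; case: ifP => [/andP[k1 m1]|_] -> //.
by apply: contrapT => ne; apply: agree; exists k.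
Qed.

Section InvariantProbability.
Variable P : probability (odoT G) R.
Hypothesis P_odometer : P (odometer Gam) = 1.
Hypothesis P_inv : forall g (B : set (odoT G)), measurable B -> P (odo_act g @^-1` B) = P B.

Lemma odo_cyl_measure N c : P (odo_cyl N c) = P (odo_cyl N 1).
Proof.
rewrite -(P_inv c^-1 (measurable_odo_cyl N 1)); congr (P _); apply/seteqP; split => o /=.
  move=> [Oo oN]; split; first exact: odometer_act.
  by rewrite /odo_act oN lcosetM mulVg.
move=> [Oo oN]; split; first by have := odometer_act c Oo; rewrite odo_actM mulgV odo_act1.
by move: oN; rewrite /odo_act lcoset_eqVl invgK lcoset1.
Qed.

Lemma probability_odometer_split N A : measurable A ->
  P A = \sum_(c \in D N) P (A `&` odo_cyl N c).
Proof.
move=> mA; rewrite -(probability_setI_full (measurable_odometer G_countable Gam) P_odometer mA).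
rewrite (odometer_cover N) setI_bigcupr; apply: measure_fin_bigcup.
- exact: (D_finite HGD).
- move=> c c' Dc Dc' [o [[_ Co] [_ Co']]]; apply: (odo_cyl_trivI Dc Dc'); by exists o.
- by move=> c _; apply: measurableI => //; exact: measurable_odo_cyl.
Qed.

Lemma probability_odo_cyls N : \sum_(c \in D N) P (odo_cyl N 1) = 1.
Proof.
rewrite -(probability_setT P) (probability_odometer_split N measurableT).
by apply: eq_fsbigr => c _; rewrite setTI odo_cyl_measure.
Qed.

Lemma probability_odo_constr N M C : P (odo_constr N M C) =
  \sum_(c \in D N) (if `[< exists o, odo_constr N M C o /\ odo_cyl N c o >]
                    then P (odo_cyl N 1) else 0).
Proof.
rewrite (probability_odometer_split N (measurable_odo_constr N M C)).
apply: eq_fsbigr => c _; case: asboolP => [[o [Ao Co]]|nAC].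
  by rewrite -(odo_cyl_measure N c) setIidr //; exact: odo_cyl_sub_constr Co.
by rewrite (_ : _ `&` _ = set0) ?measure0 //; apply/seteqP; split => // o [Ao Co]; apply: nAC; exists o.
Qed.

End InvariantProbability.

Lemma fsbig_cst_inj (T : choiceType) (A : set T) (x y : \bar R) :
  finite_set A -> A !=set0 -> x \is a fin_num -> y \is a fin_num ->
  \sum_(a \in A) x = \sum_(a \in A) y -> x = y.
Proof.
move=> finA [a Aa] xfin yfin; rewrite !fsbig_finite // !big_const_seq.
set n := count _ _; have n_gt0 : (0 < n)%N.
  by rewrite /n -has_count; apply/hasP; exists a; rewrite ?in_fset_set ?mem_set.
rewrite !iter_addr_0; case: x xfin => // x _; case: y yfin => // y _.
move=> e; have [{}e] : ((x *+ n)%:E = (y *+ n)%:E :> \bar R) by rewrite !EFin_natmul.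
congr EFin; apply: (mulIf (x := n%:R)); first by rewrite pnatr_eq0 -lt0n.
by rewrite !mulr_natr.
Qed.

(* The finite-constraint sets generate the sigma-algebra and, up to a null set, are
   finite unions of cylinders, all of the same measure. *)
Lemma odometer_measure_unique (P1 P2 : probability (odoT G) R) :
  P1 (odometer Gam) = 1 ->
  (forall g (B : set (odoT G)), measurable B -> P1 (odo_act g @^-1` B) = P1 B) ->
  P2 (odometer Gam) = 1 ->
  (forall g (B : set (odoT G)), measurable B -> P2 (odo_act g @^-1` B) = P2 B) ->
  forall B, measurable B -> P1 B = P2 B.
Proof.
move=> P1odo P1inv P2odo P2inv.
have cylE N : P1 (odo_cyl N 1) = P2 (odo_cyl N 1).
  apply: (fsbig_cst_inj (D_finite HGD N) (ex_intro (D N) 1%g (D1 HGD N)));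
    try exact: fin_num_measure (measurable_odo_cyl N 1).
  by rewrite !probability_odo_cyls.
apply: (measure_unique odo_constr_sets (fun=> setT)).
- exact: odo_constr_sets_generate.
- exact: odo_constr_sets_setI.
- by move=> _; right; exists 0%N, (fun=> false), (fun=> set0); apply/seteqP.
- by rewrite bigcup_const.
- move=> A [->|[N [M [C ->]]]]; first by rewrite !measure0.
  change (P1 (odo_constr N M C) = P2 (odo_constr N M C)).
  rewrite (probability_odo_constr P1odo P1inv) (probability_odo_constr P2odo P2inv).
  by apply: eq_fsbigr => c _; rewrite cylE.
- by move=> _; change (P1 setT < +oo); rewrite probability_setT ltry.
Qed.

End OdometerMeasure.

Section FactorMeasurability.
Variable G : groupType.
Variables (Gam D : nat -> set G) (r : nat) (eta : G -> nat) (i : nat).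
Hypothesis G_countable : countable [set: G].

Lemma measurable_Cset2 n j : measurable (Cset2 Gam D r eta n j : set (configT G)).
Proof.
apply: measurableI; first apply: measurableI.
- exact: measurable_orbit_closure.
- apply: measurable_setAll => [|a]; first exact: countableP.
  by apply: measurable_setImp; [exact: measurable_setP|exact: measurable_Per_eq].
- apply: measurable_setAll => // g.
  by apply: measurable_setImp; [exact: measurable_setP|exact: measurable_cylG].
Qed.

Lemma measurable_Aset : measurable (Aset Gam D r eta i : set (configT G)).
Proof.
rewrite (_ : Aset _ _ _ _ _ = [set z : configT G | forall g, exists k, forall l, (k <= l)%N ->
    exists v, D (i + l * r)%N v /\ Cset2 Gam D r eta (i + l * r)%N i (shift (v * g^-1) z)]).
  apply: measurable_setAll => // g; apply: measurable_setEx => [|k]; first exact: countableP.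
  apply: measurable_setAll => [|l]; first exact: countableP.
  apply: measurable_setImp; first exact: measurable_setP.
  apply: measurable_setEx => // v; apply: measurableI; first exact: measurable_setP.
  by apply: measurable_preimage_shift; exact: measurable_Cset2.
by apply/seteqP; split => z /AsetP.
Qed.

Lemma measurable_factor : measurable_fun setT (factor Gam r eta : configT G -> odoT G).
Proof.
apply: (@measurability _ _ (configT G) (odoT G) setT _ (@cylO G)) => //.
move=> _ [_ [n [C ->]] <-]; rewrite setTI.
rewrite (_ : factor Gam r eta @^-1` _ = [set x : configT G | forall w, C w <->
    (forall a, (1 <= a <= r)%N -> Per x (Gam n) a = lcoset w (Per eta (Gam n) a))]).
  apply: measurable_setAll => // w; apply: measurable_setIff; first exact: measurable_setP.
  apply: measurable_setAll => [|a]; first exact: countableP.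
  by apply: measurable_setImp; [exact: measurable_setP|exact: measurable_Per_eq].
apply/seteqP; split => x /=; first by move=> <-.
by move=> H; apply/seteqP; split => w /H.
Qed.

Lemma measurable_factor_inv :
  measurable_fun setT (factor_inv Gam r eta i : odoT G -> configT G).
Proof.
apply: (@measurability _ _ (odoT G) (configT G) setT _ (@cylG G)) => //.
move=> _ [_ [h [b ->]] <-]; rewrite setTI.
apply: (measurable_first_sat (Q := fun a (o : odoT G) => coset_Per Gam eta o h a)) => a.
apply: measurable_setEx => [|n]; first exact: countableP.
apply: measurable_setEx => // c.
by apply: measurableI; [exact: measurable_cylO|exact: measurable_setP].
Qed.

End FactorMeasurability.

Section Conjugacy.
Variable G : groupType.
Variables (Gam D : nat -> set G) (r : nat) (eta : G -> nat) (i : nat).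
Hypothesis HGD : setting Gam D.
Hypothesis G_countable : countable [set: G].

Local Notation factor := (factor Gam r eta).
Local Notation factor_inv := (factor_inv Gam r eta i).

Definition conj_dom : set (configT G) :=
  [set x | orbit_closure eta x /\ odometer Gam (factor x) /\ factor_inv (factor x) = x].

Definition conj_img : set (odoT G) :=
  [set o | odometer Gam o /\ conj_dom (factor_inv o) /\ factor (factor_inv o) = o].

Lemma measurable_factor_invK : measurable [set x : configT G | factor_inv (factor x) = x].
Proof.
rewrite (_ : [set x | _] = [set x : configT G | forall h, exists b,
    factor_inv (factor x) h = b /\ x h = b]).
  apply: measurable_setAll => // h; apply: measurable_setEx => [|b]; first exact: countableP.
  apply: measurableI; last exact: measurable_cylG.
  apply: (measurable_preimageT (B := [set o : odoT G | factor_inv o h = b])).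
    exact: measurable_factor.
  exact: (measurable_preimageT (measurable_factor_inv _ _ _ _ G_countable) (measurable_cylG h b)).
apply/seteqP; split => x /=; first by move=> -> h; exists (x h).
by move=> H; apply: funext => h; have [b [-> ->]] := H h.
Qed.

Lemma measurable_conj_dom : measurable conj_dom.
Proof.
apply: measurableI; first exact: measurable_orbit_closure.
apply: measurableI; last exact: measurable_factor_invK.
apply: (measurable_preimageT (measurable_factor _ _ _ G_countable)).
exact: measurable_odometer.
Qed.

Lemma measurable_conj_img : measurable conj_img.
Proof.
have mfi := measurable_factor_inv Gam r eta i G_countable.
rewrite (_ : conj_img = [set o | odometer Gam o /\ conj_dom (factor_inv o) /\
   forall n, exists c, o n = lcoset c (Gam n) /\ factor (factor_inv o) n = lcoset c (Gam n)]).
  apply: measurableI; first exact: measurable_odometer.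
  apply: measurableI; first exact: (measurable_preimageT mfi measurable_conj_dom).
  apply: measurable_setAll => [|n]; first exact: countableP.
  apply: measurable_setEx => // c; apply: measurableI; first exact: measurable_cylO.
  apply: (measurable_preimageT (B := [set x : configT G | factor x n = lcoset c (Gam n)]) mfi).
  exact: (measurable_preimageT (measurable_factor _ _ _ G_countable) (measurable_cylO n _)).
apply/seteqP; split => o [Oo [Xo H]]; split => //; split => //.
  by move=> n; have [c on] := Oo.1 n; exists c; rewrite H.
by apply: funext => n; have [c [-> ->]] := H n.
Qed.

Hypothesis r_gt1 : (1 < r)%N.
Hypothesis eta_J : forall m h g, J Gam D m h -> Gam m.+1 g -> eta (h * g) = alpha r m.+1.
Hypothesis i_range : (1 <= i <= r)%N.

Lemma Aset_sub_conj_dom : orbit_closure eta `&` Aset Gam D r eta i `<=` conj_dom.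
Proof.
move=> x [Ox Ax]; split => //; split; first exact: (factor_odometer HGD r_gt1 eta_J Ax).
exact: (factor_invK HGD r_gt1 eta_J i_range Ax).
Qed.

Lemma conj_dom_shift g x : conj_dom x -> conj_dom (shift g x).
Proof.
move=> [Ox [Ofx fx]]; split; first exact: orbit_closure_shift.
by rewrite (factor_act _ _ HGD) factor_inv_act fx; split => //; exact: odometer_act.
Qed.

Lemma conj_img_act g o : conj_img o -> conj_img (odo_act g o).
Proof.
move=> [Oo [Xo fo]]; split; first exact: odometer_act.
by rewrite factor_inv_act (factor_act _ _ HGD) fo; split => //; exact: conj_dom_shift.
Qed.

Lemma factor_conj_dom x : conj_dom x -> conj_img (factor x).
Proof. by move=> Xx; have [_ [Ofx fx]] := Xx; split => //; rewrite fx. Qed.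

Lemma factor_bij : set_bij conj_dom conj_img factor.
Proof.
split; first exact: factor_conj_dom.
  by move=> x y; rewrite !inE => -[_ [_ fx]] [_ [_ fy]] e; rewrite -fx -fy e.
by move=> o [_ [Xo fo]]; exists (factor_inv o).
Qed.

Lemma measurable_factor_image (A : set (configT G)) : measurable A ->
  measurable (factor @` (conj_dom `&` A) : set (odoT G)).
Proof.
move=> mA; rewrite (_ : factor @` _ = conj_img `&` factor_inv @^-1` A).
  apply: measurableI; first exact: measurable_conj_img.
  exact: (measurable_preimageT (measurable_factor_inv _ _ _ _ G_countable)).
apply/seteqP; split => [_ [x [Xx Ax] <-]|o [[Oo [Xo fo]] Ao]]; last by exists (factor_inv o).
by split; [exact: factor_conj_dom|have [_ [_ fx]] := Xx; rewrite /preimage /= fx].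
Qed.

Section Measures.
Variable R : realType.
Variables (mu : probability (configT G) R) (nu : probability (odoT G) R).
Hypothesis mu_orbit : mu (orbit_closure eta) = 1%E.
Hypothesis mu_inv : forall g (A : set (configT G)), measurable A -> mu (shift g @^-1` A) = mu A.
Hypothesis mu_Aset : mu (Aset Gam D r eta i) = 1%E.
Hypothesis nu_odometer : nu (odometer Gam) = 1%E.
Hypothesis nu_inv : forall g (B : set (odoT G)), measurable B -> nu (odo_act g @^-1` B) = nu B.

Lemma mu_conj_dom : mu conj_dom = 1%E.
Proof.
apply: (probability_full_subset _ measurable_conj_dom Aset_sub_conj_dom).
  by apply: measurableI; [exact: measurable_orbit_closure|exact: measurable_Aset].
by rewrite probability_setI_full //; [exact: measurable_Aset|exact: measurable_orbit_closure].
Qed.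

Lemma nu_factor B : measurable B -> nu B = mu (factor @^-1` B).
Proof.
pose mf := measurable_factor Gam r eta G_countable.
pose pf := distribution mu (mfun_Sub (mem_set mf : _ \in mfun)).
apply: (odometer_measure_unique HGD G_countable (P2 := pf)) => //.
  apply: (probability_full_subset _ _ _ mu_conj_dom); first exact: measurable_conj_dom.
    exact: (measurable_preimageT mf (measurable_odometer G_countable Gam)).
  by move=> x [_ []].
move=> g B' mB'; rewrite /pf /distribution /pushforward /=.
rewrite -[RHS](mu_inv g); last exact: (measurable_preimageT mf).
by congr (mu _); apply/seteqP; split => x /=; rewrite (factor_act _ _ HGD).
Qed.

Lemma nu_conj_img : nu conj_img = 1%E.
Proof.
rewrite nu_factor; last exact: measurable_conj_img.
apply: (probability_full_subset _ _ _ mu_conj_dom); first exact: measurable_conj_dom.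
  exact: (measurable_preimageT (measurable_factor _ _ _ G_countable) measurable_conj_img).
exact: factor_conj_dom.
Qed.

Lemma factor_measure_preserving B : measurable B ->
  nu (conj_img `&` B) = mu (conj_dom `&` factor @^-1` B).
Proof.
move=> mB; have mf := measurable_factor Gam r eta G_countable.
rewrite nu_factor; last by apply: measurableI => //; exact: measurable_conj_img.
rewrite -(probability_setI_full measurable_conj_dom mu_conj_dom); last first.
  by apply: (measurable_preimageT mf); apply: measurableI => //; exact: measurable_conj_img.
rewrite setIC; congr (mu _); apply/seteqP; split => x [Xx fxB]; split => //.
  by case: fxB.
by split => //; exact: factor_conj_dom.
Qed.

End Measures.

End Conjugacy.

Theorem proposition5p8 (R : realType) (G : groupType)
  (Gam D : nat -> set G) (r : nat) (eta : G -> nat)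
  (mu : probability (configT G) R) (i : nat) :
  countable [set: G] ->
  residually_finite G ->
  setting Gam D ->
  (1 < r)%N ->
  (forall m h g, J Gam D m h -> Gam m.+1 g -> eta (h * g) = alpha r m.+1) ->
  mu (orbit_closure eta) = 1%E ->
  (forall g (A : set (configT G)), measurable A -> mu (shift g @^-1` A) = mu A) ->
  (1 <= i <= r)%N ->
  mu (Aset Gam D r eta i) = 1%E ->
  forall nu : probability (odoT G) R,
    nu (odometer Gam) = 1%E ->
    (forall g (B : set (odoT G)), measurable B -> nu (odo_act g @^-1` B) = nu B) ->
    measure_conjugate (orbit_closure eta : set (configT G)) (@shift G) mu
                      (odometer Gam : set (odoT G)) (@odo_act G) nu.
Proof.
(* Residual finiteness already follows from [setting Gam D]. *)
move=> Gc _ HGD r_gt1 eta_J mu_orbit mu_inv i_range mu_Aset nu nu_odometer nu_inv.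
have mu_dom := mu_conj_dom HGD Gc r_gt1 eta_J i_range mu_orbit mu_Aset.
have nu_img := nu_conj_img HGD Gc r_gt1 eta_J i_range mu_orbit mu_inv mu_Aset nu_odometer nu_inv.
have mdom := measurable_conj_dom Gam r eta i Gc.
have mimg := measurable_conj_img Gam r eta i Gc.
exists (conj_dom Gam r eta i), (conj_img Gam r eta i), (factor Gam r eta); split.
- split => //; first by move=> x [].
    exact: probability_setD_full (measurable_orbit_closure Gc eta) mdom mu_dom.
  exact: conj_dom_shift HGD.
- split => //; first by move=> o [].
    exact: probability_setD_full (measurable_odometer Gc Gam) mimg nu_img.
  exact: conj_img_act HGD.
- split; first exact: (factor_bij Gam r eta i).
    exact: measurable_funS (measurable_factor Gam r eta Gc).
  exact: measurable_factor_image Gc.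
- by move=> g x _; exact: (factor_act _ _ HGD).
- exact: (factor_measure_preserving HGD Gc r_gt1 eta_J i_range mu_orbit mu_inv mu_Aset
    nu_odometer nu_inv).
Qed.
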